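(* Let $A$ be as in the context, suppose $A$ is normal and $cone(A)$ is simplicial, and let $\Delta$ be the coarsest triangulation of $cone(A)$, whose single maximal face is $cone(A)$ itself. Then there exists a cost vector $c\in\mathbb Z^n$ (generic) such that $\Delta=\Delta_c$ and $IP_{A,c}$ is a Gomory family.
   Context: $A\in\mathbb Z^{d\times n}$ has rank $d$, columns $a_1,\dots,a_n$, $cone(A)$ pointed, $\{x\in\mathbb R^n_{\ge0}:Ax=0\}=\{0\}$, $\mathbb ZA=\mathbb Z^d$, $\mathbb NA=\{Au:u\in\mathbb N^n\}$. $A$ is normal if $\mathbb NA=cone(A)\cap\mathbb Z^d$. For $c\in\mathbb R^n$, $\Delta_c$ is the collection of $\sigma\subseteq\{1,\dots,n\}$ (identified with cones $cone(A_\sigma)$) for which some $y\in\mathbb R^d$ has $y\cdot a_j=c_j$ ($j\in\sigma$), $y\cdot a_j<c_j$ ($j\notin\sigma$). A cost vector $c$ is generic if $\Delta_c$ is a triangulation and every program $IP_{A,c}(b)=\min\{c\cdot x: Ax=b,\ x\in\mathbb N^n\}$, $b\in\mathbb NA$, has a unique optimal solution; $IP_{A,c}$ is the family of these programs. For a maximal face $\sigma$ of $\Delta_c$ let $\tilde c_{\bar\sigma}=c_{\bar\sigma}-c_\sigma A_\sigma^{-1}A_{\bar\sigma}$; the group relaxation $G^\sigma(b)$ is $\min\{\tilde c_{\bar\sigma}\cdot x_{\bar\sigma}: A_\sigma x_\sigma+A_{\bar\sigma}x_{\bar\sigma}=b,\ x_{\bar\sigma}\ge0,\ x\in\mathbb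 Z^n\}$, which solves $IP_{A,c}(b)$ if its optimal solution is non-negative. $IP_{A,c}$ is a Gomory family if for every $b\in\mathbb NA$ some maximal face $\sigma$ of $\Delta_c$ has $G^\sigma(b)$ solving $IP_{A,c}(b)$. *)

From HB Require Import structures.
From mathcomp Require Import all_boot all_order all_algebra.
From mathcomp Require Import reals.
Set Implicit Arguments. Unset Strict Implicit. Unset Printing Implicit Defensive.
Import Order.TTheory GRing.Theory Num.Theory.
Local Open Scope ring_scope.

Section IPDefs.
Variables (R : realType) (d n : nat) (A : 'M[int]_(d, n)).

Definition Ar : 'M[R]_(d, n) := map_mx (fun z : int => z%:~R) A.

Definition in_cone (v : 'cV[R]_d) : Prop :=
  exists x : 'cV[R]_n, (forall j, 0 <= x j 0) /\ v = Ar *m x.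

Definition in_cone_sub (s : {set 'I_n}) (v : 'cV[R]_d) : Prop :=
  exists x : 'cV[R]_n, (forall j, 0 <= x j 0) /\ (forall j, j \notin s -> x j 0 = 0)
    /\ v = Ar *m x.

Definition indep_cols (s : {set 'I_n}) : Prop :=
  forall x : 'cV[R]_n, (forall j, j \notin s -> x j 0 = 0) -> Ar *m x = 0 -> x = 0.

Definition in_NA (b : 'cV[int]_d) : Prop :=
  exists u : 'cV[int]_n, (forall j, 0 <= u j 0) /\ b = A *m u.

Definition lattice_spanning : Prop :=
  forall b : 'cV[int]_d, exists u : 'cV[int]_n, b = A *m u.

Definition cone_pointed : Prop :=
  forall v, in_cone v -> in_cone (- v) -> v = 0.

Definition kernel_condition : Prop :=
  forall x : 'cV[R]_n, (forall j, 0 <= x j 0) -> Ar *m x = 0 -> x = 0.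

Definition normal : Prop :=
  forall b : 'cV[int]_d, in_cone (map_mx (fun z : int => z%:~R) b) -> in_NA b.

Definition simplicial : Prop :=
  exists V : 'M[R]_d, V \in unitmx /\
    forall v : 'cV[R]_d, in_cone v <->
      exists x : 'cV[R]_d, (forall i, 0 <= x i 0) /\ v = V *m x.

(* sigma is the single maximal face of the coarsest triangulation:
   cone(A_sigma) = cone(A) with A_sigma linearly independent *)
Definition coarsest_face (s : {set 'I_n}) : Prop :=
  indep_cols s /\ forall v, in_cone v <-> in_cone_sub s v.

Definition is_triangulation (D : {set 'I_n} -> Prop) : Prop :=
  [/\ forall s t : {set 'I_n}, D s -> t \subset s -> D t,
      forall s, D s -> indep_cols s,
      forall v, in_cone v <-> exists s, D s /\ in_cone_sub s v &
      forall s t : {set 'I_n}, D s -> D t -> forall v,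
        (in_cone_sub s v /\ in_cone_sub t v) <-> in_cone_sub (s :&: t) v].

Definition ya (y : 'rV[R]_d) (j : 'I_n) : R := (y *m Ar) 0 j.

Definition cr (c : 'rV[int]_n) (j : 'I_n) : R := (c 0 j)%:~R.

Definition Delta_c (c : 'rV[int]_n) (s : {set 'I_n}) : Prop :=
  exists y : 'rV[R]_d, forall j,
    (j \in s -> ya y j = cr c j) /\ (j \notin s -> ya y j < cr c j).

Definition maximal_face (c : 'rV[int]_n) (s : {set 'I_n}) : Prop :=
  Delta_c c s /\ forall t : {set 'I_n}, Delta_c c t -> s \subset t -> t = s.

Definition IP_feasible (b : 'cV[int]_d) (u : 'cV[int]_n) : Prop :=
  (forall j, 0 <= u j 0) /\ A *m u = b.

Definition cost (c : 'rV[int]_n) (u : 'cV[int]_n) : int := (c *m u) 0 0.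

Definition IP_optimal (c : 'rV[int]_n) (b : 'cV[int]_d) (u : 'cV[int]_n) : Prop :=
  IP_feasible b u /\ forall v, IP_feasible b v -> cost c u <= cost c v.

Definition generic (c : 'rV[int]_n) : Prop :=
  is_triangulation (Delta_c c) /\
  forall b, in_NA b -> exists u, IP_optimal c b u /\ forall v, IP_optimal c b v -> v = u.

(* group relaxation G^sigma(b): x in Z^n, A x = b, x_j >= 0 for j notin sigma,
   minimizing ctilde . x_sigmabar, where ctilde_j = c_j - (c_sigma A_sigma^{-1}) a_j
   and y = c_sigma A_sigma^{-1} is the (unique, A_sigma invertible) row vector
   with y . a_j = c_j for j in sigma. *)
Definition G_feasible (s : {set 'I_n}) (b : 'cV[int]_d) (x : 'cV[int]_n) : Prop :=
  A *m x = b /\ forall j, j \notin s -> 0 <= x j 0.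

Definition G_obj (c : 'rV[int]_n) (y : 'rV[R]_d) (s : {set 'I_n}) (x : 'cV[int]_n) : R :=
  \sum_(j | j \notin s) (cr c j - ya y j) * (x j 0)%:~R.

(* G^sigma(b) solves IP_{A,c}(b): its optimal solution is non-negative *)
Definition G_solves (c : 'rV[int]_n) (s : {set 'I_n}) (b : 'cV[int]_d) : Prop :=
  exists y : 'rV[R]_d, (forall j, j \in s -> ya y j = cr c j) /\
  exists x, G_feasible s b x /\
    (forall x', G_feasible s b x' -> G_obj c y s x <= G_obj c y s x') /\
    (forall j, 0 <= x j 0).

Definition gomory_family (c : 'rV[int]_n) : Prop :=
  forall b, in_NA b -> exists s, maximal_face c s /\ G_solves c s b.

End IPDefs.

(* Let sigma be the single maximal face, so every column a_j lies in cone(A_sigma),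
   and fix an integer row g with g.a_i >= 1 on sigma (hence g.a_j >= 1 for all j).
   The cost vanishes on sigma and is c_j = B^n (g.a_j) + B^j off sigma, with
   B = 1 + sum_(i in sigma) g.a_i.  As c_sigma = 0, the faces of Delta_c are exactly
   the subsets of sigma, and the group relaxation G^sigma(b) minimizes c.x itself.
   Write b = A_sigma mu with mu >= 0: a group-feasible x has x_sigma <= floor mu, so
   its leading part g.A x_(not sigma) = g.b - g.A x_sigma is smallest exactly when
   x_sigma = floor mu, and normality (applied to b - A floor mu) makes such x
   non-negative.  For these x the leading part is < B, so the entries x_(not sigma)
   are base-B digits and sum_j B^j x_j tells them apart; its minimizer is the unique
   optimum of both IP_{A,c}(b) and G^sigma(b). *)

From HB Require Import structures.
From mathcomp Require Import all_boot all_order all_algebra.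
From mathcomp Require Import reals boolp.
From mathcomp Require Import ring lra zify.
Set Implicit Arguments. Unset Strict Implicit. Unset Printing Implicit Defensive.
Import Order.TTheory GRing.Theory Num.Theory.
Local Open Scope ring_scope.

Lemma digits_lt (B m : nat) (w : 'I_m -> nat) :
  (forall j, w j < B)%N -> (\sum_(j < m) w j * B ^ j < B ^ m)%N.
Proof.
elim: m w => [|m IH] w hw; first by rewrite big_ord0 expn0.
rewrite big_ord_recr /= expnS.
have := IH (fun j => w (widen_ord (leqnSn m) j)) (fun j => hw _).
have := hw ord_max; set s := (\sum_(i < m) _)%N; set X := (B ^ m)%N.
set a := w ord_max; nia.
Qed.

Lemma digits_inj (B m : nat) (w w' : 'I_m -> nat) :
  (forall j, w j < B)%N -> (forall j, w' j < B)%N ->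
  (\sum_(j < m) w j * B ^ j = \sum_(j < m) w' j * B ^ j)%N -> w =1 w'.
Proof.
elim: m w w' => [|m IH] w w' hw hw' e; first by case.
have B_gt0 : (0 < B)%N by apply: leq_ltn_trans (hw ord0).
have digitsS (v : 'I_m.+1 -> nat) : (\sum_(j < m.+1) v j * B ^ j =
    (\sum_(j < m) v (lift ord0 j) * B ^ j) * B + v ord0)%N.
  rewrite big_ord_recl expn0 muln1 addnC big_distrl /=; congr (_ + _)%N.
  by apply: eq_bigr => j _; rewrite /bump leq0n add1n expnSr mulnA.
move: e; rewrite !digitsS => e.
have e0 : w ord0 = w' ord0.
  by have := congr1 (modn^~ B) e; rewrite !modnMDl !modn_small.
have /IH eS : (\sum_(j < m) w (lift ord0 j) * B ^ j =
    \sum_(j < m) w' (lift ord0 j) * B ^ j)%N.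
  by have := congr1 (divn^~ B) e; rewrite !divnMDl // !divn_small ?addn0.
by move=> j; case: (unliftP ord0 j) => [k ->|->]; [exact: eS | exact: e0].
Qed.

Lemma exists_int_row_ge1 (R : realType) (d n : nat) (M : 'M[R]_(d, n)) (s : {set 'I_n})
    (h : 'rV[R]_d) : (forall i, i \in s -> (h *m M) 0 i = 1) ->
  exists g : 'rV[int]_d, forall i, i \in s -> 1 <= (map_mx intr g *m M) 0 i.
Proof.
move=> hM; pose K : R := 1 + \sum_k \sum_i `|M k i|.
exists (\row_k Num.floor (K * h 0 k)) => i iS.
pose frac k := K * h 0 k - (Num.floor (K * h 0 k))%:~R.
have frac_le k : frac k * M k i <= `|M k i|.
  have f0 : 0 <= frac k by rewrite subr_ge0 floor_le.
  have f1 : frac k <= 1.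
    by have := floorD1_gt (K * h 0 k); rewrite intrD /frac; lra.
  by rewrite (le_trans (ler_norm _)) // normrM ger0_norm // ler_piMl.
have -> : (map_mx intr (\row_k Num.floor (K * h 0 k)) *m M) 0 i
    = K - \sum_k frac k * M k i.
  have h1 : \sum_k h 0 k * M k i = 1 by have := hM i iS; rewrite mxE.
  transitivity (K * \sum_k h 0 k * M k i - \sum_k frac k * M k i);
    last by rewrite h1 mulr1.
  rewrite mulr_sumr -sumrB mxE; apply: eq_bigr => k _.
  by rewrite !mxE /frac mulrBl mulrA opprB addrC subrK.
have : \sum_k frac k * M k i <= \sum_k \sum_i' `|M k i'|.
  apply: ler_sum => k _; apply: le_trans (frac_le k) _.
  by rewrite (bigD1 i) //= lerDl sumr_ge0.
rewrite /K; lra.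
Qed.

Definition supported (R : realType) (n : nat) (s : {set 'I_n}) (x : 'cV[R]_n) :=
  forall j, j \notin s -> x j 0 = 0.

Lemma supported_sub (R : realType) (n : nat) (s t : {set 'I_n}) (x : 'cV[R]_n) :
  s \subset t -> supported s x -> supported t x.
Proof. by move=> st xs j jt; apply: xs; apply: contra jt; apply: (subsetP st). Qed.

Section Columns.
Variables (R : realType) (d n : nat) (A : 'M[int]_(d, n)).
Local Notation Ar := (Ar R A).

Lemma ArM m (u : 'M[int]_(n, m)) : Ar *m map_mx intr u = map_mx intr (A *m u).
Proof. by rewrite /Ar map_mxM. Qed.

Lemma yaE (y : 'rV[R]_d) (x : 'cV[R]_n) :
  (y *m (Ar *m x)) 0 0 = \sum_j ya A y j * x j 0.
Proof. by rewrite mulmxA mxE. Qed.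

Lemma ya_intr (g : 'rV[int]_d) j : ya A (map_mx intr g : 'rV[R]_d) j = ((g *m A) 0 j)%:~R.
Proof. by rewrite /ya /Ar -map_mxM mxE. Qed.

Lemma indep_cols_row_solvable (s : {set 'I_n}) : indep_cols R A s ->
  forall e : 'rV[R]_n, exists y : 'rV[R]_d, forall i, i \in s -> ya A y i = e 0 i.
Proof.
move=> hs e; pose P : 'M[R]_n := diag_mx (\row_j (j \in s)%:R).
(* Independence of the s-columns kills every column of cokermx (Ar *m P) on s. *)
have PC : P *m cokermx (Ar *m P) = 0.
  apply/matrixP => i k.
  have : P *m col k (cokermx (Ar *m P)) = 0.
    apply: hs; first by move=> j /negbTE js; rewrite mul_diag_mx !mxE js mul0r.
    by rewrite colE mulmxA (mulmxA (Ar *m P)) mulmx_coker mul0mx.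
  by move/matrixP => /(_ i 0); rewrite colE mulmxA -colE !mxE.
have : (e *m P <= Ar *m P)%MS by rewrite submxE -mulmxA PC mulmx0.
case/submxP => y ey; exists y => i iS.
have := congr1 (fun M : 'rV[R]_n => M 0 i) ey.
by rewrite mulmxA !mul_mx_diag !mxE iS !mulr1 /ya mxE => ->.
Qed.

Lemma col_neq0 : kernel_condition R A -> forall j, col j Ar != 0.
Proof.
move=> hker j; apply/eqP => e.
have : delta_mx j 0 = 0 :> 'cV[R]_n.
  by apply: hker; [move=> i; rewrite mxE ler0n | rewrite -colE].
by move/matrixP => /(_ j 0) /eqP; rewrite !mxE !eqxx oner_eq0.
Qed.

Lemma IP_feasible_G_feasible (s : {set 'I_n}) b u :
  IP_feasible A b u -> G_feasible A s b u.
Proof. by case=> u0 eu; split. Qed.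

End Columns.

Section CoarsestFace.
Variables (R : realType) (d n : nat) (A : 'M[int]_(d, n)) (sigma : {set 'I_n}).
Hypothesis hsig : coarsest_face R A sigma.
Local Notation Ar := (Ar R A).

Lemma coarsest_coords v : in_cone A v ->
  exists k, [/\ supported sigma k, forall j, 0 <= k j 0 & v = Ar *m k].
Proof. by case: hsig => _ h /h [k [k0 [ks ->]]]; exists k. Qed.

Lemma coarsest_coords_inj x x' : supported sigma x -> supported sigma x' ->
  Ar *m x = Ar *m x' -> x = x'.
Proof.
move=> sx sx' e; apply/eqP; rewrite -subr_eq0; apply/eqP; apply: hsig.1.
  by move=> j jn; rewrite !mxE sx // sx' // subr0.
by rewrite mulmxBr e subrr.
Qed.

Lemma col_coarsest_coords j : exists k, [/\ supported sigma k,
  forall i, 0 <= k i 0, col j Ar = Ar *m k & forall z, ya A z j = \sum_i ya A z i * k i 0].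
Proof.
have [|k [sk k0 ek]] := @coarsest_coords (col j Ar).
  exists (delta_mx j 0); split; last by rewrite colE.
  by move=> i; rewrite mxE ler0n.
by exists k; split => // z; rewrite -yaE -ek colE mulmxA -colE mxE.
Qed.

Lemma ya_le0 (z : 'rV[R]_d) :
  (forall i, i \in sigma -> ya A z i <= 0) -> forall j, ya A z j <= 0.
Proof.
move=> h j; have [k [sk k0 _ ->]] := col_coarsest_coords j.
rewrite sumr_le0 // => i _; case: (boolP (i \in sigma)) => iS.
  by rewrite mulr_le0_ge0 // h.
by rewrite sk // mulr0.
Qed.

Lemma ya_gt0 (z : 'rV[R]_d) : kernel_condition R A ->
  (forall i, i \in sigma -> 0 < ya A z i) -> forall j, 0 < ya A z j.
Proof.
move=> hker h j; have [k [sk k0 ek ->]] := col_coarsest_coords j.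
have term_ge0 i : 0 <= ya A z i * k i 0.
  case: (boolP (i \in sigma)) => iS; first by rewrite mulr_ge0 // ltW // h.
  by rewrite sk // mulr0.
rewrite lt_def sumr_ge0 // andbT; apply/eqP => /(psumr_eq0P (fun i _ => term_ge0 i)) k_eq0.
have : k = 0.
  apply/matrixP => i i0; rewrite (ord1 i0) mxE.
  case: (boolP (i \in sigma)) => iS; last exact: sk.
  by have /eqP := k_eq0 i isT; rewrite mulf_eq0 gt_eqF ?h //= => /eqP.
by move=> k0'; have := col_neq0 hker j; rewrite ek k0' mulmx0 eqxx.
Qed.

Lemma exists_row_gA_ge1 :
  exists g : 'rV[int]_d, forall i, i \in sigma -> 1 <= (g *m A) 0 i.
Proof.
have [h hh] := indep_cols_row_solvable hsig.1 (const_mx 1).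
have [|g hg] := @exists_int_row_ge1 _ _ _ Ar sigma h.
  by move=> i /hh; rewrite mxE.
by exists g => i /hg; rewrite -(ler1z R) -ya_intr.
Qed.

End CoarsestFace.

Section GomoryCost.
Variables (R : realType) (d n : nat) (A : 'M[int]_(d, n)) (sigma : {set 'I_n}).
Hypotheses (hsig : coarsest_face R A sigma) (hker : kernel_condition R A).
Hypothesis hnormal : normal R A.
Variable g : 'rV[int]_d.
Hypothesis gpos : forall i, i \in sigma -> 1 <= (g *m A) 0 i.
Local Notation Ar := (Ar R A).
Local Notation gA j := ((g *m A) 0 j).

Lemma gA_ge1 j : 1 <= gA j.
Proof.
have gt0 : 0 < ya A (map_mx intr g : 'rV[R]_d) j.
  by apply: (ya_gt0 hsig) => // i /gpos; rewrite ya_intr ltr0z; lia.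
by move: gt0; rewrite ya_intr ltr0z.
Qed.

Definition lead_bound : int := \sum_(i in sigma) gA i.
Definition base : nat := (absz lead_bound).+1.

Definition gomory_cost : 'rV[int]_n :=
  \row_j (if j \in sigma then 0 else (base ^ n)%:Z * gA j + (base ^ j)%:Z).

Lemma gomory_cost_sigma j : j \in sigma -> gomory_cost 0 j = 0.
Proof. by move=> jS; rewrite mxE jS. Qed.

Lemma gomory_cost_ge1 j : j \notin sigma -> 1 <= gomory_cost 0 j.
Proof.
move=> /negbTE jS; rewrite mxE jS; have := gA_ge1 j.
have : (0 < base ^ j)%N by rewrite expn_gt0.
set X := (base ^ n)%N; set Y := (base ^ j)%N; lia.
Qed.

Definition lead (x : 'cV[int]_n) := \sum_(j | j \notin sigma) gA j * x j 0.
Definition tail (x : 'cV[int]_n) := \sum_(j | j \notin sigma) (base ^ j)%:Z * x j 0.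

Lemma cost_lead_tail x : cost gomory_cost x = (base ^ n)%:Z * lead x + tail x.
Proof.
rewrite /cost mxE (bigID (mem sigma)) /= big1 ?add0r; last first.
  by move=> j jS; rewrite gomory_cost_sigma // mul0r.
rewrite mulr_sumr -big_split; apply: eq_bigr => j /negbTE jS.
by rewrite mxE jS mulrDl mulrA.
Qed.

Lemma Delta_c_gomoryE t : Delta_c R A gomory_cost t <-> t \subset sigma.
Proof.
split.
  case=> y hy; apply/subsetP => j jt; apply/negPn/negP => jS.
  have : ya A y j <= 0.
    apply: (ya_le0 hsig) => i iS; have := hy i; rewrite /cr gomory_cost_sigma //.
    by case: (boolP (i \in t)) => it [h1 h2]; [rewrite h1 | rewrite ltW // h2].
  rewrite ((hy j).1 jt) /cr; have := gomory_cost_ge1 jS; rewrite -(ler1z R); lra.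
move=> ts; have [y hy] := indep_cols_row_solvable hsig.1 (\row_i - (i \notin t)%:R).
have ya_sigma i : i \in sigma -> ya A y i = - (i \notin t)%:R.
  by move=> /hy ->; rewrite mxE.
exists y => j; split.
  move=> jt; have jS := subsetP ts j jt.
  by rewrite /cr ya_sigma // gomory_cost_sigma // jt oppr0.
move=> jt; case: (boolP (j \in sigma)) => jS.
  by rewrite ya_sigma // /cr gomory_cost_sigma // jt ltrN10.
have : ya A y j <= 0 by apply: (ya_le0 hsig) => i /ya_sigma ->; rewrite oppr_le0 ler0n.
rewrite /cr; have := gomory_cost_ge1 jS; rewrite -(ler1z R); lra.
Qed.

Lemma gomory_cost_triangulation : is_triangulation R A (Delta_c R A gomory_cost).
Proof.
split.
- by move=> s t /Delta_c_gomoryE ss ts; apply/Delta_c_gomoryE; apply: subset_trans ss.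
- by move=> s /Delta_c_gomoryE ss x /(supported_sub ss) xs; apply: hsig.1.
- move=> v; split; last by case=> s [_ [x [x0 [_ ->]]]]; exists x.
  by move=> /hsig.2 vS; exists sigma; split => //; apply/Delta_c_gomoryE.
move=> s t /Delta_c_gomoryE ss /Delta_c_gomoryE ts v; split.
  case=> [[x [x0 [xs ex]]] [x' [_ [xt ex']]]].
  have xx' : x = x'.
    apply: (coarsest_coords_inj hsig (supported_sub ss xs) (supported_sub ts xt)).
    by rewrite -ex -ex'.
  exists x; split=> //; split=> // j; rewrite in_setI negb_and => /orP [] jn.
    exact: xs.
  by rewrite xx'; exact: xt.
case=> x [x0 [xst ex]]; split; exists x; do !split => //.
  exact: supported_sub (subsetIl s t) xst.
exact: supported_sub (subsetIr s t) xst.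
Qed.

Definition tail_digit (u : 'cV[int]_n) j : nat := if j \in sigma then 0%N else absz (u j 0).

Lemma tail_digitsE (u : 'cV[int]_n) : (forall j, 0 <= u j 0) ->
  tail u = (\sum_j tail_digit u j * base ^ j)%N.
Proof.
move=> u0; rewrite (big_morph Posz PoszD (erefl (Posz 0))) /tail big_mkcond /=.
apply: eq_bigr => j _; rewrite /tail_digit; case: (j \in sigma) => //=.
by rewrite PoszM gez0_abs // mulrC.
Qed.

Section Fiber.
Variables (b : 'cV[int]_d) (mu : 'cV[R]_n).
Hypotheses (smu : supported sigma mu) (mu0 : forall j, 0 <= mu j 0)
  (emu : map_mx intr b = Ar *m mu).

Definition mu_floor : 'cV[int]_n := map_mx (@Num.floor R) mu.

Lemma mu_floorE j : mu_floor j 0 = Num.floor (mu j 0). Proof. by rewrite mxE. Qed.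

Lemma mu_floor_ge0 j : 0 <= mu_floor j 0.
Proof. by rewrite mu_floorE floor_ge_int. Qed.

Lemma G_feasible_le_floor x : G_feasible A sigma b x ->
  forall i, i \in sigma -> x i 0 <= mu_floor i 0.
Proof.
move=> [ex xpos] i iS; pose x' : 'cV[int]_n := \col_j (if j \in sigma then 0 else x j 0).
(* A x' = b - A_sigma x_sigma lies in cone(A), so its coordinates mu - x_sigma are >= 0. *)
have [|nu [snu nu0 enu]] := @coarsest_coords _ _ _ _ _ hsig (Ar *m map_mx intr x').
  exists (map_mx intr x'); split => // j; rewrite !mxE ler0z.
  by case: ifP => jS //; apply: xpos; rewrite jS.
have nuE : nu = mu - map_mx intr (x - x').
  apply: (coarsest_coords_inj hsig) => //.
    by move=> j /negbTE jS; rewrite !mxE jS smu ?jS // subrr add0r mulr0z oppr0.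
  by rewrite -enu mulmxBr -emu !ArM mulmxBr ex map_mxB opprB addrC subrK.
have := nu0 i; rewrite nuE !mxE iS subr0 subr_ge0 => h.
by rewrite floor_ge_int.
Qed.

Definition lead_min := (g *m b) 0 0 - \sum_(i in sigma) gA i * mu_floor i 0.

Lemma lead_sub_min x : A *m x = b ->
  lead x - lead_min = \sum_(i in sigma) gA i * (mu_floor i 0 - x i 0).
Proof.
move=> ex; rewrite /lead_min -ex mulmxA mxE (bigID (mem sigma)) /=.
under [in RHS]eq_bigr do rewrite mulrBr.
by rewrite sumrB /lead; ring.
Qed.

Lemma lead_gap_ge0 x : G_feasible A sigma b x ->
  forall i, i \in sigma -> 0 <= gA i * (mu_floor i 0 - x i 0).
Proof.
move=> xG i iS; rewrite mulr_ge0 ?subr_ge0 ?(G_feasible_le_floor xG) //.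
exact: le_trans (gA_ge1 i).
Qed.

Lemma lead_min_le x : G_feasible A sigma b x -> lead_min <= lead x.
Proof.
move=> xG; rewrite -subr_ge0 lead_sub_min ?xG.1 //.
by rewrite sumr_ge0 // => i /(lead_gap_ge0 xG).
Qed.

Lemma lead_eq_min x : G_feasible A sigma b x -> lead x = lead_min ->
  forall i, i \in sigma -> x i 0 = mu_floor i 0.
Proof.
move=> xG /eqP; rewrite -subr_eq0 lead_sub_min ?xG.1 // => /eqP.
move=> /(psumr_eq0P (lead_gap_ge0 xG)) gap0 i /gap0 /eqP.
rewrite mulf_eq0 subr_eq0 => /orP [/eqP gA0 | /eqP //].
by have := gA_ge1 i; rewrite gA0.
Qed.

Definition floor_solution u :=
  IP_feasible A b u /\ forall i, i \in sigma -> u i 0 = mu_floor i 0.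

Lemma floor_solution_exists : exists u, floor_solution u.
Proof.
have [|u0 [u00 eu0]] := @hnormal (b - A *m mu_floor).
  exists (mu - map_mx intr mu_floor); split.
    by move=> j; rewrite !mxE subr_ge0 floor_le.
  by rewrite mulmxBr -emu ArM map_mxB.
have uIP : IP_feasible A b (u0 + mu_floor).
  split; first by move=> j; rewrite mxE addr_ge0 ?mu_floor_ge0.
  by rewrite mulmxDr -eu0 subrK.
exists (u0 + mu_floor); split => // i iS; apply/le_anti.
rewrite (G_feasible_le_floor (IP_feasible_G_feasible sigma uIP)) //= [leRHS]mxE lerDr.
exact: u00.
Qed.

Lemma lead_min_le_bound : lead_min <= lead_bound.
Proof.
rewrite -(ler_int R).
have gb : ((g *m b) 0 0)%:~R = \sum_(i in sigma) (gA i)%:~R * mu i 0 :> R.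
  have -> : ((g *m b) 0 0)%:~R = map_mx intr (g *m b) 0 0 :> R by rewrite [RHS]mxE.
  rewrite map_mxM emu yaE (bigID (mem sigma)) /= [X in _ + X]big1 ?addr0.
    by apply: eq_bigr => i _; rewrite ya_intr.
  by move=> j /smu ->; rewrite mulr0.
rewrite /lead_min /lead_bound intrB gb !rmorph_sum -sumrB; apply: ler_sum => i _.
have := floorD1_gt (mu i 0); have := floor_le (mu i 0); have := gA_ge1 i.
rewrite -(ler_int R) intrD rmorphM /= mu_floorE !mulr1z; nra.
Qed.

Lemma floor_solution_lead u : floor_solution u -> lead u = lead_min.
Proof.
case=> [[u0 eu] uf]; apply/eqP; rewrite -subr_eq0 lead_sub_min //.
by rewrite big1 // => i iS; rewrite uf // subrr mulr0.
Qed.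

Lemma floor_solution_lt_base u : floor_solution u ->
  forall j, j \notin sigma -> u j 0 < (base : int).
Proof.
move=> uf j jS; have [[u0 _] _] := uf.
have : u j 0 <= lead u.
  rewrite /lead (bigD1 j) //= -[leLHS]addr0 lerD //.
    by rewrite -[leLHS]mul1r ler_wpM2r ?gA_ge1.
  by rewrite sumr_ge0 // => k _; rewrite mulr_ge0 // (le_trans _ (gA_ge1 k)).
rewrite floor_solution_lead // => /le_trans/(_ lead_min_le_bound).
rewrite /base; lia.
Qed.

Lemma floor_solution_digit_lt u : floor_solution u -> forall j, (tail_digit u j < base)%N.
Proof.
move=> uf j; rewrite /tail_digit; case: ifP => // /negbT /(floor_solution_lt_base uf).
by have := uf.1.1 j; lia.
Qed.

Lemma floor_solution_tail_lt u : floor_solution u -> tail u < (base ^ n)%:Z.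
Proof.
move=> uf; rewrite (tail_digitsE uf.1.1).
exact: digits_lt (floor_solution_digit_lt uf).
Qed.

Lemma floor_solution_tail_inj u v :
  floor_solution u -> floor_solution v -> tail u = tail v -> u = v.
Proof.
move=> uf vf; rewrite (tail_digitsE uf.1.1) (tail_digitsE vf.1.1) => -[].
move/(digits_inj (floor_solution_digit_lt uf) (floor_solution_digit_lt vf)) => digits_eq.
apply/matrixP => j k; rewrite (ord1 k).
case: (boolP (j \in sigma)) => jS; first by rewrite uf.2 // vf.2.
have := digits_eq j; rewrite /tail_digit (negbTE jS).
by have := uf.1.1 j; have := vf.1.1 j; lia.
Qed.

Lemma floor_solution_tail_argmin :
  exists2 u, floor_solution u & forall v, floor_solution v -> tail u <= tail v.
Proof.
pose P k := `[< exists2 v, floor_solution v & tail v = k%:Z >].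
have [k /asboolP [u uf uk] kmin] : {k | P k & forall m, P m -> (k <= m)%N}.
  apply: find_ex_minn; have [u uf] := floor_solution_exists.
  by eexists; apply/asboolP; exists u; last exact: tail_digitsE uf.1.1.
exists u => // v vf; rewrite uk (tail_digitsE vf.1.1) lez_nat.
by apply: kmin; apply/asboolP; exists v; last exact: tail_digitsE vf.1.1.
Qed.

Lemma gomory_cost_unique_min : exists2 u, IP_feasible A b u &
  forall x, G_feasible A sigma b x -> cost gomory_cost u <= cost gomory_cost x /\
    (cost gomory_cost x = cost gomory_cost u -> x = u).
Proof.
have [u uf umin] := floor_solution_tail_argmin.
exists u => [|x xG]; first exact: uf.1.
rewrite !cost_lead_tail (floor_solution_lead uf).
have [lead_eq | lead_neq] := eqVneq (lead x) lead_min.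
  have xf : floor_solution x.
    split; last exact: lead_eq_min.
    split; last exact: xG.1.
    move=> j; case: (boolP (j \in sigma)) => jS; last exact: xG.2.
    by rewrite (lead_eq_min xG lead_eq) ?mu_floor_ge0.
  rewrite lead_eq lerD2l umin //; split => // /addrI.
  exact: floor_solution_tail_inj.
have lead_gt : lead_min < lead x by rewrite lt_def lead_neq (lead_min_le xG).
have tail_x_ge0 : 0 <= tail x.
  by rewrite sumr_ge0 // => j /xG.2 xj; rewrite mulr_ge0.
have tail_u_ge0 : 0 <= tail u by rewrite (tail_digitsE uf.1.1).
have cost_lt : (base ^ n)%:Z * lead_min + tail u < (base ^ n)%:Z * lead x + tail x.
  move: lead_gt tail_x_ge0 tail_u_ge0 (floor_solution_tail_lt uf).
  set M := (base ^ n)%:Z; set a := lead x; set p := tail x; set q := tail u; nia.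
by split=> [|cost_eq]; [exact: ltW | move: cost_lt; rewrite cost_eq ltxx].
Qed.

End Fiber.

Lemma in_NA_unique_min b : in_NA A b ->
  exists2 u, IP_feasible A b u & forall x, G_feasible A sigma b x ->
    cost gomory_cost u <= cost gomory_cost x /\
    (cost gomory_cost x = cost gomory_cost u -> x = u).
Proof.
move=> [u [u0 eb]].
have [|mu [smu mu0 emu]] := @coarsest_coords _ _ _ _ _ hsig (map_mx intr b).
  by exists (map_mx intr u); split=> [j|]; rewrite ?mxE ?ler0z // eb ArM.
exact: gomory_cost_unique_min smu mu0 emu.
Qed.

Lemma gomory_cost_generic : generic R A gomory_cost.
Proof.
split; first exact: gomory_cost_triangulation.
move=> b /in_NA_unique_min [u uIP umin].
have {}umin v (vIP : IP_feasible A b v) := umin v (IP_feasible_G_feasible sigma vIP).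
exists u; split; first by split => // v /umin [].
move=> v [vIP vopt]; apply: (umin v vIP).2; apply/le_anti.
by rewrite vopt // (umin v vIP).1.
Qed.

Lemma G_obj0_cost (x : 'cV[int]_n) :
  G_obj A gomory_cost (0 : 'rV[R]_d) sigma x = (cost gomory_cost x)%:~R.
Proof.
rewrite /G_obj /cost mxE rmorph_sum [RHS](bigID (mem sigma)) /= [X in _ = X + _]big1 ?add0r.
  by apply: eq_bigr => j _; rewrite /ya mul0mx mxE subr0 /cr rmorphM.
by move=> j jS; rewrite gomory_cost_sigma // mul0r rmorph0.
Qed.

Lemma gomory_cost_gomory_family : gomory_family R A gomory_cost.
Proof.
move=> b /in_NA_unique_min [u uIP umin]; exists sigma; split.
  split; first exact/Delta_c_gomoryE.
  by move=> t /Delta_c_gomoryE ts st; apply/eqP; rewrite eqEsubset ts st.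
exists 0; split; first by move=> j jS; rewrite /ya mul0mx mxE /cr gomory_cost_sigma.
exists u; split; [exact: IP_feasible_G_feasible | split; last exact: uIP.1].
by move=> x /umin [le _]; rewrite !G_obj0_cost ler_int.
Qed.

End GomoryCost.

Theorem corollary4p8 (R : realType) (d n : nat) (A : 'M[int]_(d, n))
  (hrank : \rank (Ar R A) = d)
  (hpointed : cone_pointed R A)
  (hker : kernel_condition R A)
  (hZ : lattice_spanning A)
  (hnormal : normal R A)
  (hsimp : simplicial R A)
  (sigma : {set 'I_n}) (hsigma : coarsest_face R A sigma) :
  exists c : 'rV[int]_n,
    generic R A c /\
    (forall t : {set 'I_n}, Delta_c R A c t <-> t \subset sigma) /\
    gomory_family R A c.
Proof.
have [g gpos] := exists_row_gA_ge1 hsigma.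
exists (gomory_cost A sigma g); split; first exact: gomory_cost_generic.
split; first exact: Delta_c_gomoryE.
exact: gomory_cost_gomory_family.
Qed.
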